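(* Let $T$ be a complete first-order theory with monster model $\mathfrak C$, and let $p(\bar x)\in S(\emptyset)$ with $\bar x$ of length $<\kappa$. If $p(\bar x)$ is extremely amenable, then the set of realizations of $p$ in $\mathfrak C$ is a single Lascar strong type, and moreover $d_L(\bar\alpha,\bar\beta)\le 2$ for all realizations $\bar\alpha,\bar\beta$ of $p$. In particular, if $T$ is extremely amenable, then Lascar strong types coincide with complete types over $\emptyset$, i.e. the Lascar Galois group $\mathrm{Gal}_L(T)=\mathrm{Aut}(\mathfrak C)/\mathrm{Autf}_L(\mathfrak C)$ is trivial.
   Context: $\mathfrak C$ is $\kappa$-saturated and strongly $\kappa$-homogeneous for a large $\kappa$; ''small'' means of size $<\kappa$. For a type $\pi(\bar x)$ over $\emptyset$, $S_\pi(\mathfrak C)=\{q\in S_{\bar x}(\mathfrak C):\pi\subseteq q\}$. $\pi$ is extremely amenable if some $q\in S_\pi(\mathfrak C)$ is $\mathrm{Aut}(\mathfrak C)$-invariant; $T$ is extremely amenable if every type in $S(\emptyset)$, in any number of variables, is extremely amenable. $\mathrm{Autf}_L(\mathfrak C)$ is the subgroup of $\mathrm{Aut}(\mathfrak C)$ generated by automorphisms fixing pointwise some small elementary submodel; its orbits on tuples are the Lascar strong types ($E_L$-classes). The Lascar distance $d_L(\bar\alpha,\bar\beta)$ is the least $n$ such that there exist $\bar\alpha_0=\bar\alpha,\dots,\bar\alpha_n=\bar\beta$ and small models $M_0,\dots,M_{n-1}$ with $\bar\alpha_i\equiv_{M_i}\bar\alpha_{i+1}$ for $i<n$. *)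

From Stdlib Require Import List Arith Fin.

Record language := Language {
  funcs : Type; rels : Type;
  farity : funcs -> nat; rarity : rels -> nat }.

Record structure (L : language) := Structure {
  carrier :> Type;
  funI : forall f : funcs L, (Fin.t (@farity L f) -> carrier) -> carrier;
  relI : forall r : rels L, (Fin.t (@rarity L r) -> carrier) -> Prop }.

Inductive term (L : language) (V : Type) : Type :=
| tvar : V -> term L V
| tapp : forall f : funcs L, (Fin.t (@farity L f) -> term L V) -> term L V.

Inductive formula (L : language) : Type -> Type :=
| feq  : forall V, term L V -> term L V -> formula L V
| frel : forall V (r : rels L), (Fin.t (@rarity L r) -> term L V) -> formula L V
| fneg : forall V, formula L V -> formula L V
| fand : forall V, formula L V -> formula L V -> formula L V
| fex  : forall V, formula L (option V) -> formula L V.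

Arguments tvar {L V}.
Arguments tapp {L V}.
Arguments feq {L V}.
Arguments frel {L V}.
Arguments fneg {L V}.
Arguments fand {L V}.
Arguments fex {L V}.

Section Syntax.
Variable L : language.

Fixpoint trename {V W : Type} (f : V -> W) (t : term L V) : term L W :=
  match t with
  | tvar v => tvar (f v)
  | tapp g args => tapp g (fun i => trename f (args i))
  end.

Fixpoint rename {V W : Type} (f : V -> W) (phi : formula L V) : formula L W :=
  match phi in formula _ V0 return (V0 -> W) -> formula L W with
  | feq t1 t2 => fun f => feq (trename f t1) (trename f t2)
  | frel r args => fun f => frel r (fun i => trename f (args i))
  | fneg psi => fun f => fneg (rename f psi)
  | fand psi chi => fun f => fand (rename f psi) (rename f chi)
  | fex psi => fun f => fex (rename (option_map f) psi)
  end f.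
End Syntax.

Section Semantics.
Variables (L : language) (M : structure L).

Fixpoint teval {V : Type} (e : V -> M) (t : term L V) : M :=
  match t with
  | tvar v => e v
  | tapp f args => @funI L M f (fun i => teval e (args i))
  end.

Definition extend {V : Type} (e : V -> M) (c : M) : option V -> M :=
  fun o => match o with Some v => e v | None => c end.

(* satisfaction with quantifiers relativized to D (D = everything gives the
   usual satisfaction in M; D a substructure gives satisfaction in D) *)
Fixpoint sat_in (D : M -> Prop) {V : Type} (phi : formula L V) : (V -> M) -> Prop :=
  match phi in formula _ V0 return (V0 -> M) -> Prop with
  | feq t1 t2 => fun e => teval e t1 = teval e t2
  | frel r args => fun e => @relI L M r (fun i => teval e (args i))
  | fneg psi => fun e => ~ sat_in D psi e
  | fand psi chi => fun e => sat_in D psi e /\ sat_in D chi e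
  | fex psi => fun e => exists c, D c /\ sat_in D psi (extend e c)
  end.

Definition sat {V : Type} (phi : formula L V) (e : V -> M) : Prop :=
  sat_in (fun _ => True) phi e.

(* ---------- cardinalities: "|A| < kappa", kappa represented by a type K ---------- *)
Definition injective {A B : Type} (f : A -> B) := forall x y, f x = f y -> x = y.
Definition card_lt (A B : Type) : Prop :=
  (exists f : A -> B, injective f) /\ ~ (exists g : B -> A, injective g).
Definition small (K : Type) (A : Type) := card_lt A K.
Definition small_set (K : Type) (D : M -> Prop) := small K {x : M | D x}.

Definition elem_submodel (D : M -> Prop) : Prop :=
  (exists x, D x) /\
  (forall (f : funcs L) (args : Fin.t (@farity L f) -> M),
      (forall i, D (args i)) -> D (@funI L M f args)) /\
  (forall (V : Type) (phi : formula L V) (e : V -> M),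
      (forall v, D (e v)) -> (sat_in D phi e <-> sat phi e)).

Definition small_model (K : Type) (D : M -> Prop) :=
  small_set K D /\ elem_submodel D.

Definition automorphism (s : M -> M) : Prop :=
  (exists t : M -> M, (forall x, s (t x) = x) /\ (forall x, t (s x) = x)) /\
  (forall f args, s (@funI L M f args) = @funI L M f (fun i => s (args i))) /\
  (forall r args, @relI L M r args <-> @relI L M r (fun i => s (args i))).

Definition fixes_pointwise (s : M -> M) (D : M -> Prop) := forall x, D x -> s x = x.

(* generators of Autf_L: automorphisms fixing pointwise a small elementary
   submodel.  This generating set is closed under inverses, so the generated
   subgroup consists of the finite compositions of generators. *)
Definition autf_generator (K : Type) (s : M -> M) :=
  automorphism s /\ exists D, small_model K D /\ fixes_pointwise s D.

Definition autfL (K : Type) (s : M -> M) : Prop :=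
  exists l : list (M -> M), Forall (autf_generator K) l /\
    forall x, s x = fold_right (fun g h => fun y => g (h y)) (fun y => y) l x.

Section Tuples.
Variable X : Type.

(* a (X -> M) is an X-tuple; parameters from D are the extra variables *)
Definition env_over (D : M -> Prop) (a : X -> M) : X + {x : M | D x} -> M :=
  fun w => match w with inl x => a x | inr c => proj1_sig c end.

Definition env_global (a : X -> M) : X + M -> M :=
  fun w => match w with inl x => a x | inr c => c end.

Definition equiv_over (D : M -> Prop) (a b : X -> M) : Prop :=
  forall phi : formula L (X + {x : M | D x}),
    sat phi (env_over D a) <-> sat phi (env_over D b).

Definition same_type (a b : X -> M) : Prop :=
  forall phi : formula L X, sat phi a <-> sat phi b.

Definition fin_sat {W : Type} (ev : (X -> M) -> W -> M)
  (q : formula L W -> Prop) : Prop :=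
  forall l : list (formula L W), Forall q l ->
    exists b : X -> M, Forall (fun phi => sat phi (ev b)) l.

Definition complete_type {W : Type} (ev : (X -> M) -> W -> M)
  (q : formula L W -> Prop) : Prop :=
  fin_sat ev q /\ forall phi, q phi \/ q (fneg phi).

Definition complete_type_empty (p : formula L X -> Prop) :=
  complete_type (fun b => b) p.

Definition global_type (q : formula L (X + M) -> Prop) :=
  complete_type env_global q.

Definition realizes (p : formula L X -> Prop) (a : X -> M) :=
  forall phi, p phi -> sat phi a.

Definition aut_invariant (q : formula L (X + M) -> Prop) : Prop :=
  forall s, automorphism s ->
    forall phi, q phi <-> q (@rename L _ _ (fun w => match w with
                                     | inl x => inl x | inr c => inr (s c) end) phi).

Definition extremely_amenable (p : formula L X -> Prop) : Prop :=
  exists q, global_type q /\ (forall phi, p phi -> q (@rename L _ _ inl phi)) /\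
            aut_invariant q.

Definition lascar_equiv (K : Type) (a b : X -> M) : Prop :=
  exists s, autfL K s /\ forall x, s (a x) = b x.

Definition lascar_dist_le (K : Type) (n : nat) (a b : X -> M) : Prop :=
  exists m, m <= n /\
    exists chain : nat -> X -> M,
      (forall x, chain 0 x = a x) /\ (forall x, chain m x = b x) /\
      forall i, i < m -> exists D, small_model K D /\ equiv_over D (chain i) (chain (S i)).
End Tuples.

Definition saturated (K : Type) : Prop :=
  forall A : M -> Prop, small_set K A ->
    forall q : formula L (unit + {x : M | A x}) -> Prop,
      fin_sat unit (env_over unit A) q ->
      exists b : unit -> M, forall phi, q phi -> sat phi (env_over unit A b).

Definition strongly_homogeneous (K : Type) : Prop :=
  forall I : Type, small K I -> forall a b : I -> M, same_type I a b ->
    exists s, automorphism s /\ forall i, s (a i) = b i.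

(* kappa is large: |L| + aleph_0 < kappa *)
Definition monster (K : Type) : Prop :=
  card_lt (funcs L + rels L + nat) K /\ saturated K /\ strongly_homogeneous K.

Definition theory_extremely_amenable (K : Type) : Prop :=
  forall X : Type, small K X -> forall p : formula L X -> Prop,
    complete_type_empty X p -> extremely_amenable X p.

End Semantics.

From Stdlib Require Import List Arith Lia Cantor.
From Stdlib Require Import Classical ClassicalEpsilon FunctionalExtensionality ProofIrrelevance.
From mathcomp Require boolp classical_sets.

(* Let q be an Aut-invariant global type extending p and fix a small model N.  A realization
   c of q|N realizes p, so for a realization a of p some automorphism s maps c to a, and by
   invariance a realizes q|s(N).  Likewise b realizes q|t(N).  Any c' realizing q over
   s(N) u t(N) then satisfies a == c' over s(N) and c' == b over t(N), so d_L(a,b) <= 2,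
   and each of these steps is performed by an automorphism fixing a small model.  When T is
   extremely amenable this applies to the type of an enumeration of a small model N: every
   automorphism agrees on N with an element f of Autf_L, and f^-1 s fixes N.

   Small models exist by the downward Loewenheim-Skolem argument (a Skolem hull has size at
   most |L| + aleph_0 because |A x A| = |A| for infinite A), and saturation for small tuples
   follows from saturation in one variable by Zorn's lemma. *)

(** * Semantics *)

Section Semantics.
Variables (L : language) (M : structure L).

Lemma teval_ext {V} (e1 e2 : V -> M) (t : term L V) :
  (forall v, e1 v = e2 v) -> teval L M e1 t = teval L M e2 t.
Proof.
  intros H; induction t as [v|f args IH]; simpl; auto.
  f_equal; apply functional_extensionality; auto.
Qed.

Lemma sat_in_ext (D : M -> Prop) {V} (phi : formula L V) :
  forall e1 e2 : V -> M, (forall v, e1 v = e2 v) ->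
  (sat_in L M D phi e1 <-> sat_in L M D phi e2).
Proof.
  induction phi as [V t1 t2|V r args|V psi IH|V psi IH1 chi IH2|V psi IH];
    intros e1 e2 H; simpl.
  - rewrite (teval_ext e1 e2 t1 H), (teval_ext e1 e2 t2 H); tauto.
  - replace (fun i => teval L M e1 (args i)) with (fun i => teval L M e2 (args i));
      [tauto|].
    apply functional_extensionality; intros; symmetry; apply teval_ext; auto.
  - rewrite (IH e1 e2 H); tauto.
  - rewrite (IH1 e1 e2 H), (IH2 e1 e2 H); tauto.
  - assert (E : forall c v, extend L M e1 c v = extend L M e2 c v)
      by (intros c [v|]; simpl; auto).
    split; intros [c [Hc Hs]]; exists c; split; auto.
    + rewrite <- (IH _ _ (E c)); auto.
    + rewrite (IH _ _ (E c)); auto.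
Qed.

Lemma teval_trename {V W} (f : V -> W) (e : W -> M) (t : term L V) :
  teval L M e (trename L f t) = teval L M (fun v => e (f v)) t.
Proof.
  induction t as [v|g args IH]; simpl; auto.
  f_equal; apply functional_extensionality; auto.
Qed.

Lemma sat_in_rename (D : M -> Prop) {V} (phi : formula L V) :
  forall W (f : V -> W) (e : W -> M),
  sat_in L M D (rename L f phi) e <-> sat_in L M D phi (fun v => e (f v)).
Proof.
  induction phi as [V t1 t2|V r args|V psi IH|V psi IH1 chi IH2|V psi IH];
    intros W f e; simpl.
  - rewrite !teval_trename; tauto.
  - replace (fun i => teval L M e (trename L f (args i)))
      with (fun i => teval L M (fun v => e (f v)) (args i)); [tauto|].
    apply functional_extensionality; intros; symmetry; apply teval_trename.
  - rewrite IH; tauto.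
  - rewrite IH1, IH2; tauto.
  - split; intros [c [Hc Hs]]; exists c; split; auto.
    + rewrite IH in Hs. revert Hs; apply sat_in_ext; intros [v|]; reflexivity.
    + rewrite IH. revert Hs; apply sat_in_ext; intros [v|]; reflexivity.
Qed.

Lemma sat_rename {V W} (f : V -> W) (phi : formula L V) (e : W -> M) :
  sat L M (rename L f phi) e <-> sat L M phi (fun v => e (f v)).
Proof. apply sat_in_rename. Qed.

Lemma sat_ext {V} (phi : formula L V) (e1 e2 : V -> M) :
  (forall v, e1 v = e2 v) -> sat L M phi e1 -> sat L M phi e2.
Proof. intros H; apply sat_in_ext; auto. Qed.

Lemma trename_trename {V W U} (f : W -> U) (g : V -> W) (t : term L V) :
  trename L f (trename L g t) = trename L (fun v => f (g v)) t.
Proof.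
  induction t as [v|h args IH]; simpl; auto.
  f_equal; apply functional_extensionality; auto.
Qed.

Lemma rename_ext {V W} (f g : V -> W) (phi : formula L V) :
  (forall v, f v = g v) -> rename L f phi = rename L g phi.
Proof. intros H; replace f with g; auto; apply functional_extensionality; auto. Qed.

Lemma rename_rename {V} (phi : formula L V) :
  forall W U (f : W -> U) (g : V -> W),
  rename L f (rename L g phi) = rename L (fun v => f (g v)) phi.
Proof.
  induction phi as [V t1 t2|V r args|V psi IH|V psi IH1 chi IH2|V psi IH];
    intros W U f g; simpl.
  - rewrite !trename_trename; auto.
  - f_equal; apply functional_extensionality; intros; apply trename_trename.
  - rewrite IH; auto.
  - rewrite IH1, IH2; auto.
  - rewrite IH; f_equal; apply rename_ext; intros [v|]; reflexivity.
Qed.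

Definition ftrue {V} : formula L V := fneg (fex (fneg (feq (tvar None) (tvar None)))).

Definition fconj {V} (l : list (formula L V)) : formula L V := fold_right fand ftrue l.

Lemma sat_fconj {V} (l : list (formula L V)) e :
  sat L M (fconj l) e <-> Forall (fun phi => sat L M phi e) l.
Proof.
  induction l as [|phi l IH]; simpl.
  - split; auto. intros _ [c [_ H]]; apply H; reflexivity.
  - unfold sat in *; simpl. rewrite IH.
    split; [intros [H1 H2]; constructor; auto|intros H; inversion H; auto].
Qed.

Definition shift_var {V} (w : V + nat) : option V + nat :=
  match w with inl v => inl (Some v) | inr 0 => inl None | inr (S j) => inr j end.

Fixpoint fexists_first (n : nat) : forall V, V -> formula L (V + nat) -> formula L V :=
  match n with
  | 0 => fun V v0 chi => rename L (fun w => match w with inl v => v | inr _ => v0 end) chi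
  | S n => fun V v0 chi => fex (fexists_first n (option V) (Some v0) (rename L shift_var chi))
  end.

Lemma sat_fexists_first n : forall V (v0 : V) chi (e : V -> M),
  sat L M (fexists_first n V v0 chi) e <->
  exists d : nat -> M, sat L M chi
    (fun w => match w with inl v => e v | inr j => if j <? n then d j else e v0 end).
Proof.
  induction n as [|n IH]; intros V v0 chi e; simpl; unfold sat in *.
  - rewrite sat_in_rename.
    split; [intros H; exists (fun _ => e v0)|intros [d H]];
      revert H; apply sat_in_ext; intros [v|j]; reflexivity.
  - split.
    + intros [c [_ H]]. apply IH in H. destruct H as [d H]. rewrite sat_in_rename in H.
      exists (fun j => match j with 0 => c | S j => d j end). revert H; apply sat_in_ext.
      intros [v|[|j]]; simpl; auto.
    + intros [d H]. exists (d 0); split; auto. apply IH. exists (fun j => d (S j)).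
      rewrite sat_in_rename. revert H; apply sat_in_ext. intros [v|[|j]]; simpl; auto.
Qed.

Lemma teval_automorphism (s : M -> M) (Hs : automorphism L M s) {V} (e : V -> M)
  (t : term L V) :
  teval L M (fun v => s (e v)) t = s (teval L M e t).
Proof.
  destruct Hs as [_ [Hf _]].
  induction t as [v|f args IH]; simpl; auto.
  rewrite Hf; f_equal; apply functional_extensionality; auto.
Qed.

Section Automorphism.
Variables (s t : M -> M).
Hypotheses (Hs : automorphism L M s)
  (Hts : forall x, t (s x) = x) (Hst : forall x, s (t x) = x).

Lemma sat_in_automorphism (D : M -> Prop) {V} (phi : formula L V) :
  forall e : V -> M,
  sat_in L M D phi e <-> sat_in L M (fun y => D (t y)) phi (fun v => s (e v)).
Proof.
  induction phi as [V t1 t2|V r args|V psi IH|V psi IH1 chi IH2|V psi IH]; intros e; simpl.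
  - rewrite !(teval_automorphism s Hs); split; intros H; [congruence|].
    rewrite <- (Hts (teval L M e t1)), H; auto.
  - replace (fun i => teval L M (fun v => s (e v)) (args i))
      with (fun i => s (teval L M e (args i))).
    + destruct Hs as [_ [_ Hr]]; apply Hr.
    + apply functional_extensionality; intros; symmetry; apply (teval_automorphism s Hs).
  - rewrite IH; tauto.
  - rewrite IH1, IH2; tauto.
  - split; intros [c [Hc H]].
    + exists (s c); rewrite Hts; split; auto.
      rewrite IH in H; revert H; apply sat_in_ext; intros [v|]; reflexivity.
    + exists (t c); split; auto.
      rewrite IH; revert H; apply sat_in_ext; intros [v|]; simpl; auto.
Qed.

Lemma sat_automorphism {V} (phi : formula L V) (e : V -> M) :
  sat L M phi e <-> sat L M phi (fun v => s (e v)).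
Proof. apply (sat_in_automorphism (fun _ => True)). Qed.

Lemma automorphism_inverse : automorphism L M t.
Proof.
  destruct Hs as [_ [Hf Hr]]. split; [exists s; auto|split].
  - intros f args. rewrite <- (Hts (funI L M f (fun i => t (args i)))), Hf.
    f_equal; f_equal; apply functional_extensionality; intros; rewrite Hst; auto.
  - intros r args. rewrite (Hr r (fun i => t (args i))).
    replace (fun i => s (t (args i))) with args; [tauto|].
    apply functional_extensionality; intros; rewrite Hst; auto.
Qed.

End Automorphism.

Lemma automorphism_id : automorphism L M (fun x => x).
Proof. split; [exists (fun x => x); auto|split]; intros; [reflexivity|tauto]. Qed.

Lemma automorphism_comp (s1 s2 : M -> M) : automorphism L M s1 -> automorphism L M s2 ->
  automorphism L M (fun x => s1 (s2 x)).
Proof.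
  intros [[t1 [H1 H1']] [Hf1 Hr1]] [[t2 [H2 H2']] [Hf2 Hr2]]; split; [|split].
  - exists (fun x => t2 (t1 x)); split; intros; [rewrite H2, H1|rewrite H1', H2']; auto.
  - intros f args; rewrite Hf2, Hf1; auto.
  - intros r args; rewrite (Hr2 r args), (Hr1 r); tauto.
Qed.

End Semantics.
(** * Zorn's lemma and cardinal arithmetic *)

Lemma zorn_premaximal (T : Type) (t0 : T) (R : T -> T -> Prop) :
  (forall t, R t t) -> (forall r s t, R r s -> R s t -> R r t) ->
  (forall A : T -> Prop, (forall s t, A s -> A t -> R s t \/ R t s) ->
     exists t, forall s, A s -> R s t) ->
  exists t, forall s, R t s -> R s t.
Proof.
  intros Hrefl Htrans Hchain.
  destruct (@classical_sets.ZL_preorder T t0 (fun s t => boolp.asbool (R s t)))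
    as [t Ht].
  - intros t; apply boolp.asboolT; auto.
  - intros r s t Hrs Hst; apply boolp.asboolT; apply boolp.asboolW in Hrs, Hst; eauto.
  - intros A HA. destruct (Hchain A) as [t Ht].
    + intros s t Hs Ht; destruct (HA s t Hs Ht) as [H|H]; apply boolp.asboolW in H; auto.
    + exists t; intros s Hs; apply boolp.asboolT; auto.
  - exists t; intros s Hs. apply boolp.asboolW, Ht, boolp.asboolT; auto.
Qed.

Definition choose {A} {P : A -> Prop} (H : exists x, P x) : A :=
  proj1_sig (constructive_indefinite_description P H).

Lemma choose_spec {A} {P : A -> Prop} (H : exists x, P x) : P (choose H).
Proof. exact (proj2_sig (constructive_indefinite_description P H)). Qed.

Notation decide := excluded_middle_informative.

Lemma sig_ext {A} {P : A -> Prop} (x y : {a | P a}) : proj1_sig x = proj1_sig y -> x = y.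
Proof. destruct x, y; simpl; intros; subst; f_equal; apply proof_irrelevance. Qed.

Definition card_le (A B : Type) := exists f : A -> B, injective f.

Lemma card_le_refl A : card_le A A.
Proof. exists (fun x => x); intros x y H; auto. Qed.

Lemma card_le_trans A B C : card_le A B -> card_le B C -> card_le A C.
Proof. intros [f Hf] [g Hg]; exists (fun x => g (f x)); intros x y H; auto. Qed.

Lemma card_le_sum A A' B B' : card_le A A' -> card_le B B' -> card_le (A + B) (A' + B').
Proof.
  intros [f Hf] [g Hg].
  exists (fun s => match s with inl a => inl (f a) | inr b => inr (g b) end).
  intros [x|x] [y|y] E; inversion E; f_equal; auto.
Qed.

Lemma card_le_sum_comm A B : card_le (A + B) (B + A).
Proof.
  exists (fun s => match s with inl a => inr a | inr b => inl b end).
  intros [x|x] [y|y] E; inversion E; auto.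
Qed.

Section Comparability.
Variables A B : Type.

Definition partial_bijection (G : A -> B -> Prop) :=
  (forall a b b', G a b -> G a b' -> b = b') /\ (forall a a' b, G a b -> G a' b -> a = a').

Lemma partial_bijection_add G a0 b0 : partial_bijection G ->
  (forall b, ~ G a0 b) -> (forall a, ~ G a b0) ->
  partial_bijection (fun a b => G a b \/ (a = a0 /\ b = b0)).
Proof.
  unfold not; intros [G1 G2] Ha0 Hb0; split.
  - intros a b b' [H|[E1 E2]] [H'|[E3 E4]]; subst; eauto; exfalso; eauto.
  - intros a a' b [H|[E1 E2]] [H'|[E3 E4]]; subst; eauto; exfalso; eauto.
Qed.

Lemma partial_bijection_chain (Ch : {G | partial_bijection G} -> Prop) :
  (forall s t, Ch s -> Ch t ->
     (forall a b, proj1_sig s a b -> proj1_sig t a b) \/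
     (forall a b, proj1_sig t a b -> proj1_sig s a b)) ->
  partial_bijection (fun a b => exists s, Ch s /\ proj1_sig s a b).
Proof.
  intros Htot; split.
  - intros a b b' [s [Hs Hab]] [s' [Hs' Hab']].
    destruct (Htot s s' Hs Hs') as [Hle|Hle]; destruct s as [Gs [Ps1 Ps2]];
      destruct s' as [Gs' [Ps1' Ps2']]; simpl in *; eauto.
  - intros a a' b [s [Hs Hab]] [s' [Hs' Hab']].
    destruct (Htot s s' Hs Hs') as [Hle|Hle]; destruct s as [Gs [Ps1 Ps2]];
      destruct s' as [Gs' [Ps1' Ps2']]; simpl in *; eauto.
Qed.

Lemma card_le_total : card_le A B \/ card_le B A.
Proof.
  assert (t0 : {G | partial_bijection G})
    by (exists (fun _ _ => False); split; intros; contradiction).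
  destruct (zorn_premaximal _ t0 (fun s t => forall a b, proj1_sig s a b -> proj1_sig t a b))
    as [[G [HG1 HG2]] Hmax]; auto.
  { intros Ch Htot. exists (exist _ _ (partial_bijection_chain Ch Htot)).
    intros s Hs a b Hab; simpl; eauto. }
  simpl in Hmax.
  destruct (classic (forall a, exists b, G a b)) as [Hall|Hn1].
  { left. exists (fun a => choose (Hall a)). intros x y Hxy.
    apply (HG2 x y (choose (Hall x))); [exact (choose_spec (Hall x))|].
    rewrite Hxy; exact (choose_spec (Hall y)). }
  destruct (classic (forall b, exists a, G a b)) as [Hall|Hn2].
  { right. exists (fun b => choose (Hall b)). intros x y Hxy.
    apply (HG1 (choose (Hall x))); [exact (choose_spec (Hall x))|].
    rewrite Hxy; exact (choose_spec (Hall y)). }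
  exfalso. apply not_all_ex_not in Hn1, Hn2. destruct Hn1 as [a0 Ha0], Hn2 as [b0 Hb0].
  assert (Hext := partial_bijection_add G a0 b0 (conj HG1 HG2)
                    (fun b H => Ha0 (ex_intro _ b H)) (fun a H => Hb0 (ex_intro _ a H))).
  assert (H := Hmax (exist _ _ Hext) (fun a b H => or_introl H) a0 b0
                 (or_intror (conj eq_refl eq_refl))).
  simpl in H; eauto.
Qed.

End Comparability.

Definition injective_on {A B} (P : A -> Prop) (g : A -> B) :=
  forall x y, P x -> P y -> g x = g y -> x = y.

Section Pairing.
Variables (A : Type) (iota : nat -> A).
Hypothesis Hiota : injective iota.

Definition pairing_on (B : A -> Prop) (f : A -> A -> A) :=
  (forall n, B (iota n)) /\ (forall x y, B x -> B y -> B (f x y)) /\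
  (forall x y x' y', B x -> B y -> B x' -> B y' -> f x y = f x' y' -> x = x' /\ y = y').

Definition pairing_le (s t : (A -> Prop) * (A -> A -> A)) :=
  (forall x, fst s x -> fst t x) /\ (forall x y, fst s x -> fst s y -> snd s x y = snd t x y).

Lemma pairing_on_range : exists f, pairing_on (fun a => exists n, iota n = a) f.
Proof.
  set (index := fun a => match decide (exists n, iota n = a) with
                         | left H => choose H | right _ => 0 end).
  assert (Hindex : forall n, index (iota n) = n).
  { intros n; unfold index; destruct (decide _) as [H|H]; [|exfalso; eauto].
    apply Hiota, (choose_spec H). }
  exists (fun x y => iota (to_nat (index x, index y))); split; [|split].
  - intros n; exists n; auto.
  - intros; eauto.
  - intros x y x' y' [m <-] [n <-] [m' <-] [n' <-] H.
    apply Hiota in H. rewrite !Hindex in H.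
    assert (E := f_equal of_nat H). rewrite !cancel_of_to in E. inversion E; auto.
Qed.

Lemma pairing_on_chain (Ch : {s | pairing_on (fst s) (snd s)} -> Prop) s1 :
  Ch s1 ->
  (forall s t, Ch s -> Ch t -> pairing_le (proj1_sig s) (proj1_sig t) \/
                               pairing_le (proj1_sig t) (proj1_sig s)) ->
  exists u : {s | pairing_on (fst s) (snd s)},
    forall s, Ch s -> pairing_le (proj1_sig s) (proj1_sig u).
Proof.
  intros Hs1 Htot.
  set (U := fun x => exists s, Ch s /\ fst (proj1_sig s) x).
  set (Both := fun x y s => Ch s /\ fst (proj1_sig s) x /\ fst (proj1_sig s) y).
  assert (Hboth : forall x y, U x -> U y -> exists s, Both x y s).
  { intros x y [s [Hs Hx]] [s' [Hs' Hy]].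
    destruct (Htot s s' Hs Hs') as [[H _]|[H _]]; [exists s'|exists s]; unfold Both; auto. }
  set (fU := fun x y => match decide (exists s, Both x y s) with
                        | left H => snd (proj1_sig (choose H)) x y | right _ => x end).
  assert (HfU : forall s x y, Both x y s -> fU x y = snd (proj1_sig s) x y).
  { intros s x y [Hs [Hx Hy]]; unfold fU; destruct (decide _) as [H|H];
      [|exfalso; apply H; exists s; repeat split; auto].
    destruct (choose_spec H) as [Hs' [Hx' Hy']].
    destruct (Htot s (choose H) Hs Hs') as [[_ E]|[_ E]]; [symmetry|]; auto. }
  assert (GU : pairing_on U fU).
  { split; [|split].
    - intros n; exists s1; split; auto. apply (proj2_sig s1).
    - intros x y Hx Hy. destruct (Hboth x y Hx Hy) as [s Hs].
      rewrite (HfU s x y Hs). destruct Hs as [Hs [Hx' Hy']]. exists s; split; auto.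
      apply (proj2_sig s); auto.
    - intros x y x' y' Hx Hy Hx' Hy' E.
      destruct (Hboth x y Hx Hy) as [s Hs]; destruct (Hboth x' y' Hx' Hy') as [s' Hs'].
      rewrite (HfU s x y Hs), (HfU s' x' y' Hs') in E.
      destruct Hs as [Hs [Hx1 Hy1]], Hs' as [Hs' [Hx2 Hy2]].
      destruct (Htot s s' Hs Hs') as [[H1 H2]|[H1 H2]].
      + rewrite (H2 x y Hx1 Hy1) in E. apply (proj2_sig s'); auto.
      + rewrite (H2 x' y' Hx2 Hy2) in E. apply (proj2_sig s); auto. }
  exists (exist _ (U, fU) GU). intros s Hs; split; simpl.
  - intros x Hx; exists s; auto.
  - intros x y Hx Hy; symmetry; apply HfU; repeat split; auto.
Qed.

Section Maximal.
Variables (B : A -> Prop) (f : A -> A -> A).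
Hypothesis Hf : pairing_on B f.

Definition tag_pair (b : bool) x := f x (iota (if b then 1 else 0)).

Lemma tag_pair_in b x : B x -> B (tag_pair b x).
Proof. intros; apply Hf; auto; apply Hf. Qed.

Lemma tag_pair_inj b b' x x' : B x -> B x' -> tag_pair b x = tag_pair b' x' -> b = b' /\ x = x'.
Proof.
  intros Hx Hx' E; apply Hf in E; try apply Hf; auto. destruct E as [E1 E2]; apply Hiota in E2.
  destruct b, b'; simpl in E2; try discriminate; auto.
Qed.

Lemma pairing_of_card_le_compl : card_le {a | ~ B a} {a | B a} ->
  exists pr : A -> A -> A, forall x y x' y', pr x y = pr x' y' -> x = x' /\ y = y'.
Proof.
  intros [j Hj].
  set (phi := fun a => match decide (B a) with
                       | left _ => tag_pair true a
                       | right h => tag_pair false (proj1_sig (j (exist _ a h))) end).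
  assert (Hphi : forall a, B (phi a)).
  { intros a; unfold phi; destruct (decide _); apply tag_pair_in; auto. apply proj2_sig. }
  assert (Hphi_inj : forall a a', phi a = phi a' -> a = a').
  { intros a a'; unfold phi;
    destruct (decide (B a)) as [h|h]; destruct (decide (B a')) as [h'|h'];
      intros E; apply tag_pair_inj in E; try apply proj2_sig; auto;
      destruct E as [E1 E2]; try discriminate; auto.
    apply sig_ext, Hj in E2. inversion E2; auto. }
  exists (fun x y => f (phi x) (phi y)).
  intros x y x' y' E. apply Hf in E; auto. destruct E; split; auto.
Qed.

Section Enlarge.
Variables (B' : A -> Prop) (rho J : A -> A).
Hypotheses (HBB' : forall x, B x -> B' x)
  (Hrho : forall x, B' x -> B (rho x)) (Hrho_inj : injective_on B' rho)
  (HJ : forall x, B x -> B' (J x) /\ ~ B (J x)) (HJ_inj : injective_on B J).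

(* pairs not already in [B] are coded in [B'] outside [B], through [J] *)
Definition enlarged_pairing x y :=
  match decide (B x /\ B y) with left _ => f x y | right _ => J (f (rho x) (rho y)) end.

Lemma pairing_on_enlarged : pairing_on B' enlarged_pairing.
Proof.
  assert (Hfr : forall x y, B' x -> B' y -> B (f (rho x) (rho y)))
    by (intros; apply Hf; auto).
  split; [|split].
  - intros n; apply HBB', Hf.
  - intros x y Hx Hy; unfold enlarged_pairing; destruct (decide _) as [[h h']|h].
    + apply HBB', Hf; auto.
    + apply HJ; auto.
  - intros x y x' y' Hx Hy Hx' Hy'; unfold enlarged_pairing.
    destruct (decide (B x /\ B y)) as [[h1 h2]|h];
      destruct (decide (B x' /\ B y')) as [[h1' h2']|h']; intros E.
    + apply Hf; auto.
    + exfalso; apply (proj2 (HJ _ (Hfr x' y' Hx' Hy'))); rewrite <- E; apply Hf; auto.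
    + exfalso; apply (proj2 (HJ _ (Hfr x y Hx Hy))); rewrite E; apply Hf; auto.
    + apply HJ_inj in E; auto. apply Hf in E; auto.
      destruct E; split; apply Hrho_inj; auto.
Qed.

End Enlarge.

Lemma pairing_on_grow : card_le {a | B a} {a | ~ B a} ->
  exists s, pairing_on (fst s) (snd s) /\ pairing_le (B, f) s /\ exists x, fst s x /\ ~ B x.
Proof.
  intros [j Hj].
  set (J := fun a => match decide (B a) with
                     | left h => proj1_sig (j (exist _ a h)) | right _ => a end).
  assert (HJ_out : forall a, B a -> ~ B (J a)).
  { intros a h; unfold J; destruct (decide _); [apply proj2_sig|contradiction]. }
  assert (HJ_inj : injective_on B J).
  { intros a a' h h'; unfold J; destruct (decide (B a)); destruct (decide (B a'));
      try contradiction.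
    intros E; apply sig_ext, Hj in E; inversion E; auto. }
  set (B' := fun x => B x \/ exists a, B a /\ J a = x).
  set (Jinv := fun x => match decide (exists a, B a /\ J a = x) with
                        | left H => choose H | right _ => x end).
  assert (HJinv : forall a, B a -> Jinv (J a) = a).
  { intros a h; unfold Jinv; destruct (decide _) as [H|H]; [|exfalso; eauto].
    destruct (choose_spec H) as [Ha' E]; apply HJ_inj; auto. }
  set (rho := fun x => match decide (B x) with
                       | left _ => tag_pair true x | right _ => tag_pair false (Jinv x) end).
  assert (Hrho : forall x, B' x -> B (rho x)).
  { intros x [h|[a [h <-]]]; unfold rho; destruct (decide _) as [h'|h'];
      apply tag_pair_in; try rewrite HJinv; auto; contradiction. }
  assert (Hrho_inj : injective_on B' rho).
  { intros x x' Hx Hx'; unfold rho.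
    destruct (decide (B x)) as [h|h]; destruct (decide (B x')) as [h'|h']; intros E.
    - apply tag_pair_inj in E; tauto.
    - destruct Hx' as [?|[a' [ha' <-]]]; [contradiction|].
      rewrite HJinv in E; auto. apply tag_pair_inj in E; auto. destruct E; discriminate.
    - destruct Hx as [?|[a [ha <-]]]; [contradiction|].
      rewrite HJinv in E; auto. apply tag_pair_inj in E; auto. destruct E; discriminate.
    - destruct Hx as [?|[a [ha <-]]]; [contradiction|].
      destruct Hx' as [?|[a' [ha' <-]]]; [contradiction|].
      rewrite !HJinv in E; auto. apply tag_pair_inj in E; auto. destruct E; subst; auto. }
  exists (B', enlarged_pairing rho J); split; [|split].
  - apply pairing_on_enlarged; auto. intros x h; left; auto. intros x h; split; auto.
    right; eauto.
  - split; simpl; [intros x h; left; auto|].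
    intros x y hx hy; unfold enlarged_pairing; destruct (decide _); tauto.
  - exists (J (iota 0)); split; [right; exists (iota 0); split; auto; apply Hf|].
    apply HJ_out, Hf.
Qed.

End Maximal.

Theorem infinite_pairing :
  exists pr : A -> A -> A, forall x y x' y', pr x y = pr x' y' -> x = x' /\ y = y'.
Proof.
  destruct pairing_on_range as [f0 Hf0].
  destruct (zorn_premaximal {s | pairing_on (fst s) (snd s)} (exist _ (_, f0) Hf0)
              (fun s t => pairing_le (proj1_sig s) (proj1_sig t)))
    as [[[B f] Hf] Hmax].
  - intros t; split; auto.
  - intros r s t [H1 H2] [H3 H4]; split; auto. intros x y Hx Hy; rewrite H2; auto.
  - intros Ch Htot. destruct (classic (exists s, Ch s)) as [[s1 Hs1]|Hne].
    + apply (pairing_on_chain Ch s1 Hs1 Htot).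
    + exists (exist _ (_, f0) Hf0); intros s Hs; exfalso; eauto.
  - simpl in Hmax.
    destruct (card_le_total {a | ~ B a} {a | B a}) as [Hle|Hle].
    + apply (pairing_of_card_le_compl B f Hf Hle).
    + destruct (pairing_on_grow B f Hf Hle) as [s [Hs [Hle' [x [Hx HnB]]]]].
      destruct (Hmax (exist _ s Hs) Hle') as [Hsub _]. simpl in Hsub.
      exfalso; apply HnB, Hsub, Hx.
Qed.

End Pairing.

Lemma card_le_sum_diag B : card_le nat B -> card_le (B + B) B.
Proof.
  intros [i Hi]. destruct (infinite_pairing B i Hi) as [pr Hpr].
  exists (fun s => match s with inl b => pr b (i 0) | inr b => pr b (i 1) end).
  intros [x|x] [y|y] E; apply Hpr in E; destruct E as [E1 E2]; subst; auto;
    apply Hi in E2; discriminate.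
Qed.

Lemma small_card_le (K Y Z : Type) : card_le Y Z -> small K Z -> small K Y.
Proof.
  intros HYZ [HZK HKZ]; split.
  - eapply card_le_trans; eauto.
  - intros HKY; apply HKZ; eapply card_le_trans; eauto.
Qed.

Lemma not_card_le_sum_diag (K B : Type) : small K nat -> small K B -> ~ card_le K (B + B).
Proof.
  intros Hnat HB HK. destruct (card_le_total nat B) as [HnB|HBn].
  - apply (proj2 HB). eapply card_le_trans; [apply HK|apply card_le_sum_diag; auto].
  - apply (proj2 Hnat). eapply card_le_trans; [apply HK|].
    eapply card_le_trans; [apply card_le_sum; apply HBn|].
    apply card_le_sum_diag, card_le_refl.
Qed.

Lemma small_sum (K A B : Type) : small K nat -> small K A -> small K B -> small K (A + B).
Proof.
  intros Hnat HA HB; split.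
  - eapply card_le_trans; [apply card_le_sum; [apply HA|apply HB]|].
    apply card_le_sum_diag, Hnat.
  - intros HK. destruct (card_le_total A B) as [HAB|HBA].
    + apply (not_card_le_sum_diag K B Hnat HB).
      eapply card_le_trans; [apply HK|apply card_le_sum; auto using card_le_refl].
    + apply (not_card_le_sum_diag K A Hnat HA).
      eapply card_le_trans; [apply HK|].
      eapply card_le_trans; [apply card_le_sum_comm|apply card_le_sum; auto using card_le_refl].
Qed.

(** * Small models *)

Section Support.
Variables (L : language) (M : structure L).

Definition term_supported_by {V} (t : term L V) (l : list V) :=
  forall e1 e2 : V -> M, (forall v, In v l -> e1 v = e2 v) -> teval L M e1 t = teval L M e2 t.

Definition supported_by {V} (phi : formula L V) (l : list V) :=
  forall D (e1 e2 : V -> M), (forall v, In v l -> e1 v = e2 v) ->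
    (sat_in L M D phi e1 <-> sat_in L M D phi e2).

Lemma fin_collect {V} n (Q : Fin.t n -> list V -> Prop) :
  (forall i l l', incl l l' -> Q i l -> Q i l') ->
  (forall i, exists l, Q i l) -> exists l, forall i, Q i l.
Proof.
  induction n as [|n IH]; intros Hmono HQ.
  - exists nil; intros i; apply (Fin.case0 (fun i => Q i nil) i).
  - destruct (HQ Fin.F1) as [l1 Hl1].
    destruct (IH (fun i => Q (Fin.FS i))) as [l2 Hl2];
      [intros i; apply Hmono|intros i; apply HQ|].
    exists (l1 ++ l2); intros i; pattern i; apply Fin.caseS'.
    + apply (Hmono _ l1); auto. apply incl_appl, incl_refl.
    + intros j; apply (Hmono _ l2); auto. apply incl_appr, incl_refl.
Qed.

Lemma term_support {V} (t : term L V) : exists l, term_supported_by t l.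
Proof.
  induction t as [v|f args IH].
  - exists (v :: nil); intros e1 e2 H; simpl; apply H; left; auto.
  - destruct (fin_collect _ (fun i => term_supported_by (args i))) as [l Hl]; auto.
    + intros i l l' Hincl H e1 e2 He; apply H; auto.
    + exists l; intros e1 e2 He; simpl; f_equal.
      apply functional_extensionality; intros i; apply Hl; auto.
Qed.

Definition somes {V} (l : list (option V)) : list V :=
  flat_map (fun o => match o with Some v => v :: nil | None => nil end) l.

Lemma in_somes {V} (v : V) l : In (Some v) l -> In v (somes l).
Proof. intros H; apply in_flat_map; exists (Some v); simpl; auto. Qed.

Lemma formula_support {V} (phi : formula L V) : exists l, supported_by phi l.
Proof.
  induction phi as [V t1 t2|V r args|V psi IH|V psi IH1 chi IH2|V psi IH].
  - destruct (term_support t1) as [l1 H1], (term_support t2) as [l2 H2].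
    exists (l1 ++ l2); intros D e1 e2 He; simpl.
    rewrite (H1 e1 e2), (H2 e1 e2); [tauto|..]; intros; apply He, in_or_app; auto.
  - destruct (fin_collect _ (fun i => term_supported_by (args i))) as [l Hl].
    + intros i l l' Hincl H e1 e2 He; apply H; auto.
    + intros i; apply term_support.
    + exists l; intros D e1 e2 He; simpl.
      replace (fun i => teval L M e1 (args i)) with (fun i => teval L M e2 (args i));
        [tauto|].
      apply functional_extensionality; intros i; symmetry; apply Hl; auto.
  - destruct IH as [l H]; exists l; intros D e1 e2 He; simpl; rewrite (H D e1 e2 He); tauto.
  - destruct IH1 as [l1 H1], IH2 as [l2 H2].
    exists (l1 ++ l2); intros D e1 e2 He; simpl.
    rewrite (H1 D e1 e2), (H2 D e1 e2); [tauto|..]; intros; apply He, in_or_app; auto.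
  - destruct IH as [l H]; exists (somes l); intros D e1 e2 He; simpl.
    assert (E : forall c,
      sat_in L M D psi (extend L M e1 c) <-> sat_in L M D psi (extend L M e2 c)).
    { intros c; apply H; intros [v|] Hv; simpl; auto. apply He, in_somes; auto. }
    split; intros [c [Hc Hs]]; exists c; split; auto; apply (E c); auto.
Qed.

End Support.

Fixpoint index_of {V} (v : V) (l : list V) : nat :=
  match l with
  | nil => 0
  | w :: l => if decide (w = v) then 0 else S (index_of v l)
  end.

Lemma index_of_spec {V} (v : V) l d :
  In v l -> index_of v l < length l /\ nth (index_of v l) l d = v.
Proof.
  induction l as [|w l IH]; simpl; [tauto|].
  intros Hv; destruct (decide (w = v)) as [E|E]; [split; auto; lia|].
  destruct Hv as [Hv|Hv]; [contradiction|]. destruct (IH Hv); split; auto; lia.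
Qed.

Lemma sat_finite_parameters (L : language) (M : structure L) {V}
  (psi : formula L (option V)) (e : V -> M) (d : M) :
  exists (p : formula L (option nat)) (vs : list V), forall c,
    sat L M psi (extend L M e c) <->
    sat L M p (extend L M (fun k => nth k (map e vs) d) c).
Proof.
  destruct (formula_support L M psi) as [l Hl]. set (vs := somes l).
  exists (rename L (option_map (fun v => index_of v vs)) psi), vs; intros c.
  rewrite sat_rename. apply Hl. intros [v|] Hv; simpl; auto.
  destruct (index_of_spec v vs v (in_somes v l Hv)) as [Hlt Hnth].
  rewrite nth_indep with (d' := e v) by (rewrite length_map; auto).
  rewrite map_nth, Hnth; reflexivity.
Qed.

Section Coding.
Variable L : language.

Definition code := (funcs L + rels L + nat)%type.

Variable pair : code -> code -> code.
Hypothesis pair_inj : forall x y x' y', pair x y = pair x' y' -> x = x' /\ y = y'.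

Definition code_nat (n : nat) : code := inr n.

Fixpoint code_fin (n : nat) : (Fin.t n -> code) -> code :=
  match n with
  | 0 => fun _ => code_nat 0
  | S n' => fun h => pair (h Fin.F1) (code_fin n' (fun i => h (Fin.FS i)))
  end.

Lemma code_fin_inj n : forall h1 h2, code_fin n h1 = code_fin n h2 -> forall i, h1 i = h2 i.
Proof.
  induction n as [|n IH]; intros h1 h2 E i.
  - apply (Fin.case0 (fun i => h1 i = h2 i) i).
  - simpl in E; apply pair_inj in E; destruct E as [E1 E2].
    pattern i; apply Fin.caseS'; auto.
    intros j; apply (IH (fun i => h1 (Fin.FS i)) (fun i => h2 (Fin.FS i)) E2).
Qed.

Fixpoint code_term {V} (ve : V -> nat) (t : term L V) : code :=
  match t with
  | tvar v => pair (code_nat 0) (code_nat (ve v))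
  | tapp f args =>
      pair (code_nat 1) (pair (inl (inl f)) (code_fin _ (fun i => code_term ve (args i))))
  end.

Lemma code_term_inj {V} (ve : V -> nat) (Hve : injective ve) (t1 : term L V) :
  forall t2, code_term ve t1 = code_term ve t2 -> t1 = t2.
Proof.
  induction t1 as [v|f args IH]; intros [v'|f' args'] E; simpl in E;
    apply pair_inj in E; destruct E as [E1 E2]; unfold code_nat in *;
    try (inversion E1; fail).
  - inversion E2; f_equal; auto.
  - apply pair_inj in E2; destruct E2 as [E2 E3]. inversion E2; subst.
    f_equal; apply functional_extensionality; intros i.
    apply IH; apply (code_fin_inj _ _ _ E3).
Qed.

Definition code_option {V} (ve : V -> nat) (o : option V) : nat :=
  match o with None => 0 | Some v => S (ve v) end.

Lemma code_option_inj {V} (ve : V -> nat) : injective ve -> injective (code_option ve).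
Proof. intros H [x|] [y|] E; simpl in E; try discriminate; auto. inversion E; f_equal; auto. Qed.

Fixpoint code_formula {V} (phi : formula L V) : (V -> nat) -> code :=
  match phi in formula _ V0 return (V0 -> nat) -> code with
  | feq _ t1 t2 => fun ve => pair (code_nat 0) (pair (code_term ve t1) (code_term ve t2))
  | frel _ r args => fun ve =>
      pair (code_nat 1) (pair (inl (inr r)) (code_fin _ (fun i => code_term ve (args i))))
  | fneg _ psi => fun ve => pair (code_nat 2) (code_formula psi ve)
  | fand _ a b => fun ve => pair (code_nat 3) (pair (code_formula a ve) (code_formula b ve))
  | fex _ psi => fun ve => pair (code_nat 4) (code_formula psi (code_option ve))
  end.

Lemma code_formula_inj {V} (phi1 : formula L V) :
  forall (ve : V -> nat), injective ve ->
  forall phi2, code_formula phi1 ve = code_formula phi2 ve -> phi1 = phi2.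
Proof.
  induction phi1 as [V t1 t2|V r args|V psi IH|V psi IH1 chi IH2|V psi IH];
    intros ve Hve phi2;
    destruct phi2 as [t1' t2'|r' args'|psi'|psi' chi'|psi']; intros E; simpl in E;
    apply pair_inj in E; destruct E as [E1 E2]; unfold code_nat in *;
    try (inversion E1; fail).
  - apply pair_inj in E2; destruct E2 as [E2 E3]. f_equal; eapply code_term_inj; eauto.
  - apply pair_inj in E2; destruct E2 as [E2 E3]. inversion E2; subst.
    f_equal; apply functional_extensionality; intros i.
    eapply code_term_inj; eauto; apply (code_fin_inj _ _ _ E3).
  - f_equal; eauto.
  - apply pair_inj in E2; destruct E2 as [E2 E3]. f_equal; eauto.
  - f_equal; eapply IH; eauto. apply code_option_inj; auto.
Qed.

Inductive skolem_term :=
| sleaf : skolem_term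
| snode : formula L (option nat) -> skolem_terms -> skolem_term
with skolem_terms :=
| snil : skolem_terms
| scons : skolem_term -> skolem_terms -> skolem_terms.

Scheme skolem_term_ind2 := Induction for skolem_term Sort Prop
with skolem_terms_ind2 := Induction for skolem_terms Sort Prop.

Fixpoint code_skolem_term (t : skolem_term) : code :=
  match t with
  | sleaf => pair (code_nat 0) (code_nat 0)
  | snode phi ts =>
      pair (code_nat 1)
           (pair (code_formula phi (code_option (fun n => n))) (code_skolem_terms ts))
  end
with code_skolem_terms (ts : skolem_terms) : code :=
  match ts with
  | snil => pair (code_nat 0) (code_nat 0)
  | scons t ts => pair (code_nat 1) (pair (code_skolem_term t) (code_skolem_terms ts))
  end.

Lemma code_skolem_term_inj : injective code_skolem_term.
Proof.
  unfold injective.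
  apply (skolem_term_ind2
           (fun t1 => forall t2, code_skolem_term t1 = code_skolem_term t2 -> t1 = t2)
           (fun l1 => forall l2, code_skolem_terms l1 = code_skolem_terms l2 -> l1 = l2)).
  - intros [|phi ts] E; simpl in E; auto.
    apply pair_inj in E; destruct E as [E _]; inversion E.
  - intros phi ts IH [|phi' ts'] E; simpl in E; apply pair_inj in E; destruct E as [E1 E2];
      unfold code_nat in *; try (inversion E1; fail).
    apply pair_inj in E2; destruct E2 as [E2 E3]. f_equal; auto.
    eapply code_formula_inj; eauto. apply code_option_inj; intros x y H; auto.
  - intros [|t ts] E; simpl in E; auto. apply pair_inj in E; destruct E as [E _]; inversion E.
  - intros t IHt ts IH [|t' ts'] E; simpl in E; apply pair_inj in E; destruct E as [E1 E2];
      unfold code_nat in *; try (inversion E1; fail).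
    apply pair_inj in E2; destruct E2 as [E2 E3]. f_equal; auto.
Qed.

End Coding.

Lemma small_nat_of_code (L : language) (K : Type) : card_lt (code L) K -> small K nat.
Proof. apply small_card_le; exists (code_nat L); intros x y E; inversion E; auto. Qed.

Arguments sleaf {L}.
Arguments snode {L}.
Arguments snil {L}.
Arguments scons {L}.

Section SkolemHull.
Variables (L : language) (M : structure L) (c0 : M).

Definition skolem (phi : formula L (option nat)) (l : list M) : M :=
  match decide (exists c, sat L M phi (extend L M (fun k => nth k l c0) c)) with
  | left H => choose H | right _ => c0 end.

Lemma skolem_spec phi l c : sat L M phi (extend L M (fun k => nth k l c0) c) ->
  sat L M phi (extend L M (fun k => nth k l c0) (skolem phi l)).
Proof.
  intros H; unfold skolem; destruct (decide _) as [H'|H']; [|exfalso; eauto].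
  apply (choose_spec H').
Qed.

Fixpoint skolem_value (t : skolem_term L) : M :=
  match t with
  | sleaf => c0
  | snode phi ts => skolem phi (skolem_values ts)
  end
with skolem_values (ts : skolem_terms L) : list M :=
  match ts with
  | snil => nil
  | scons t ts => skolem_value t :: skolem_values ts
  end.

Definition skolem_hull (x : M) : Prop := exists t, skolem_value t = x.

Lemma skolem_hull_base : skolem_hull c0.
Proof. exists sleaf; auto. Qed.

Lemma skolem_hull_skolem phi l : Forall skolem_hull l -> skolem_hull (skolem phi l).
Proof.
  intros H. assert (exists ts, skolem_values ts = l) as [ts Hts].
  { induction H as [|x l [t Ht] _ [ts Hts]]; [exists snil; auto|].
    exists (scons t ts); simpl; congruence. }
  exists (snode phi ts); simpl; congruence.
Qed.

Lemma skolem_hull_witness {V} (psi : formula L (option V)) (e : V -> M) c :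
  (forall v, skolem_hull (e v)) -> sat L M psi (extend L M e c) ->
  exists c', skolem_hull c' /\ sat L M psi (extend L M e c').
Proof.
  intros He H.
  destruct (sat_finite_parameters L M psi e c0) as [p [vs Hp]].
  exists (skolem p (map e vs)); split.
  - apply skolem_hull_skolem, Forall_forall; intros x Hx.
    apply in_map_iff in Hx; destruct Hx as [v [<- _]]; auto.
  - apply Hp, (skolem_spec _ _ c), Hp, H.
Qed.

Lemma skolem_hull_tarski_vaught {V} (phi : formula L V) :
  forall e, (forall v, skolem_hull (e v)) -> (sat_in L M skolem_hull phi e <-> sat L M phi e).
Proof.
  induction phi as [V t1 t2|V r args|V psi IH|V psi IH1 chi IH2|V psi IH];
    intros e He; unfold sat in *; simpl; try tauto.
  - rewrite IH; auto; tauto.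
  - rewrite IH1, IH2; auto; tauto.
  - assert (He' : forall c, skolem_hull c -> forall o, skolem_hull (extend L M e c o))
      by (intros c Hc [v|]; simpl; auto).
    split.
    + intros [c [Hc H]]; exists c; split; auto. apply IH; auto.
    + intros [c [_ H]]. destruct (skolem_hull_witness psi e c He H) as [c' [Hc' H']].
      exists c'; split; auto. apply IH; auto.
Qed.

Lemma skolem_hull_elementary : elem_submodel L M skolem_hull.
Proof.
  split; [exists c0; apply skolem_hull_base|split].
  - intros f args Hargs.
    set (phi := fex (feq (tvar None) (tapp f (fun i => tvar (Some i))))
                : formula L (Fin.t (farity L f))).
    assert (H : sat L M phi args)
      by (unfold sat, phi; simpl; exists (funI L M f args); split; auto).
    apply skolem_hull_tarski_vaught in H; auto.
    destruct H as [c [Hc E]]; simpl in E. replace (funI L M f args) with c; auto.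
  - intros V phi e He; apply skolem_hull_tarski_vaught; auto.
Qed.

Lemma skolem_hull_card_le : card_le {x | skolem_hull x} (code L).
Proof.
  destruct (infinite_pairing (code L) (code_nat L)) as [pair pair_inj].
  { intros x y E; inversion E; auto. }
  exists (fun x : {x | skolem_hull x} => code_skolem_term L pair (choose (proj2_sig x))).
  intros [x Hx] [y Hy] E; simpl in E.
  apply code_skolem_term_inj in E; auto.
  apply sig_ext; simpl. rewrite <- (choose_spec Hx), <- (choose_spec Hy), E; reflexivity.
Qed.

End SkolemHull.

Lemma exists_small_model (L : language) (M : structure L) (K : Type)
  (HK : card_lt (code L) K) (c0 : M) : exists D, small_model L M K D.
Proof.
  exists (skolem_hull L M c0); split.
  - eapply small_card_le; [apply skolem_hull_card_le|exact HK].
  - apply skolem_hull_elementary.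
Qed.

(** * Saturation for small tuples *)

Section SmallSets.
Variables (L : language) (M : structure L) (K : Type).

Lemma small_set_union (P Q : M -> Prop) : small K nat ->
  small_set L M K P -> small_set L M K Q -> small_set L M K (fun z => P z \/ Q z).
Proof.
  intros Hnat HP HQ. apply (small_card_le K _ ({z | P z} + {z | Q z})); [|apply small_sum; auto].
  assert (H : forall z : {z | P z \/ Q z}, ~ P (proj1_sig z) -> Q (proj1_sig z))
    by (intros [z [Hz|Hz]] Hn; simpl in *; tauto).
  exists (fun z => match decide (P (proj1_sig z)) with
                   | left h => inl (exist P _ h) | right h => inr (exist Q _ (H z h)) end).
  intros z1 z2; destruct (decide (P (proj1_sig z1))); destruct (decide (P (proj1_sig z2)));
    intros E; try discriminate; injection E; intros E'; apply sig_ext; auto.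
Qed.

Lemma small_set_image (X : Type) (Y : X -> Prop) (h : X -> M) :
  small K X -> small_set L M K (fun z => exists y, Y y /\ h y = z).
Proof.
  intros HX. apply (small_card_le K _ X); auto.
  exists (fun z : {z | exists y, Y y /\ h y = z} => choose (proj2_sig z)).
  intros [z1 H1] [z2 H2] E; apply sig_ext; simpl in *.
  destruct (choose_spec H1) as [_ <-], (choose_spec H2) as [_ <-]; congruence.
Qed.

End SmallSets.

Definition left_vars {X A} (l : list (X + A)) : list X :=
  flat_map (fun w => match w with inl x => x :: nil | inr _ => nil end) l.

Lemma in_left_vars {X A} (x : X) (l : list (X + A)) : In (inl x) l -> In x (left_vars l).
Proof. intros H; apply in_flat_map; exists (inl x); simpl; auto. Qed.

Lemma gather_lists {T G} (P : T -> Prop) (F : list T -> G) (lg : list G) :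
  Forall (fun g => exists l, Forall P l /\ g = F l) lg ->
  exists lall, Forall P lall /\ forall g, In g lg -> exists l, incl l lall /\ g = F l.
Proof.
  induction 1 as [|g lg [l [Hl ->]] _ [lall [Hall Hin]]]; [exists nil; split; auto; intros g []|].
  exists (l ++ lall); split; [apply Forall_app; auto|].
  intros g [<-|Hg].
  - exists l; split; auto. apply incl_appl, incl_refl.
  - destruct (Hin g Hg) as [l' [Hl' ->]]; exists l'; split; auto. apply incl_appr; auto.
Qed.

Section Saturation.
Variables (L : language) (M : structure L) (K X : Type) (A : M -> Prop).
Variable Sg : formula L (X + {x | A x}) -> Prop.

Definition partial_realization (Y : X -> Prop) (h : X -> M) :=
  forall l, Forall Sg l -> exists b, (forall x, Y x -> b x = h x) /\
    Forall (fun phi => sat L M phi (env_over L M X A b)) l.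

Definition extends (s t : (X -> Prop) * (X -> M)) :=
  (forall x, fst s x -> fst t x) /\ (forall x, fst s x -> snd s x = snd t x).

Section Chain.
Variable Ch : {s | partial_realization (fst s) (snd s)} -> Prop.
Hypothesis Htot : forall s t, Ch s -> Ch t ->
  extends (proj1_sig s) (proj1_sig t) \/ extends (proj1_sig t) (proj1_sig s).
Variable s1 : {s | partial_realization (fst s) (snd s)}.
Hypothesis Hs1 : Ch s1.

Let U := fun x => exists s, Ch s /\ fst (proj1_sig s) x.

Lemma chain_covers_list (xs : list X) :
  exists s0, Ch s0 /\ forall x, In x xs -> U x -> fst (proj1_sig s0) x.
Proof.
  induction xs as [|x xs [s0 [Hs0 Hin]]]; [exists s1; split; auto; intros y []|].
  destruct (classic (U x)) as [[s' [Hs' Hx]]|HnU].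
  - destruct (Htot s0 s' Hs0 Hs') as [[H1 _]|[H1 _]].
    + exists s'; split; auto. intros y [<-|Hy] HUy; auto.
    + exists s0; split; auto. intros y [<-|Hy] HUy; auto.
  - exists s0; split; auto. intros y [<-|Hy] HUy; [contradiction|auto].
Qed.

Lemma partial_realization_chain :
  exists u : {s | partial_realization (fst s) (snd s)},
    forall s, Ch s -> extends (proj1_sig s) (proj1_sig u).
Proof.
  set (hU := fun x => match decide (U x) with
                      | left H => snd (proj1_sig (choose H)) x
                      | right _ => snd (proj1_sig s1) x end).
  assert (HhU : forall s x, Ch s -> fst (proj1_sig s) x -> hU x = snd (proj1_sig s) x).
  { intros s x Hs Hx; unfold hU;
      destruct (decide _) as [H|H]; [|exfalso; apply H; exists s; auto].
    destruct (choose_spec H) as [Hs' Hx'].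
    destruct (Htot s (choose H) Hs Hs') as [[_ E]|[_ E]]; [symmetry|]; auto. }
  assert (GU : partial_realization U hU).
  { intros l Hl.
    destruct (formula_support L M (fconj L l)) as [ls Hls].
    destruct (chain_covers_list (left_vars ls)) as [[[Y0 h0] G0] [Hs0 Hin]]; simpl in Hin.
    destruct (G0 l Hl) as [b [Hbh Hbl]].
    exists (fun x => match decide (U x) with left _ => hU x | right _ => b x end); split.
    { intros x Hx; destruct (decide _); [auto|contradiction]. }
    apply sat_fconj; apply sat_fconj in Hbl. revert Hbl. apply Hls.
    intros [x|a] Hw; simpl; auto. destruct (decide (U x)) as [HU|HU]; auto.
    assert (Hx := Hin x (in_left_vars x ls Hw) HU).
    rewrite (Hbh x Hx); apply (HhU _ x Hs0 Hx). }
  exists (exist _ (U, hU) GU). intros s Hs; split; simpl.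
  - intros x Hx; exists s; auto.
  - intros x Hx; symmetry; apply HhU; auto.
Qed.

End Chain.

Section Extension.
Variables (Y : X -> Prop) (h : X -> M) (x0 : X).

Definition enlarged_params (z : M) : Prop := A z \/ exists y, Y y /\ h y = z.

Definition enlarged_var (xs : list X) (w : X + {x | A x})
  : (unit + {z | enlarged_params z}) + nat :=
  match w with
  | inr a => inl (inr (exist _ (proj1_sig a) (or_introl (proj2_sig a))))
  | inl x =>
      match decide (x = x0) with
      | left _ => inl (inl tt)
      | right _ => match decide (Y x) with
                   | left Hy =>
                       inl (inr (exist _ (h x) (or_intror (ex_intro _ x (conj Hy eq_refl)))))
                   | right _ => inr (index_of x xs)
                   end
      end
  end.

(* only finitely many variables occur in [phi]; those outside [Y] and [x0] are
   quantified away *)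
Definition extension_formula (phi : formula L (X + {x | A x}))
  : formula L (unit + {z | enlarged_params z}) :=
  let xs := left_vars (choose (formula_support L M phi)) in
  fexists_first L (length xs) _ (inl tt) (rename L (enlarged_var xs) phi).

Lemma sat_extension_formula (phi : formula L (X + {x | A x})) (z : M) : ~ Y x0 ->
  (sat L M (extension_formula phi) (env_over L M unit enlarged_params (fun _ => z)) <->
   exists b, b x0 = z /\ (forall x, Y x -> b x = h x) /\ sat L M phi (env_over L M X A b)).
Proof.
  intros HY0. unfold extension_formula.
  assert (Hls := choose_spec (formula_support L M phi)).
  set (ls := choose (formula_support L M phi)) in *. set (xs := left_vars ls).
  rewrite sat_fexists_first. setoid_rewrite sat_rename.
  split.
  - intros [d H].
    exists (fun x => match decide (x = x0) with left _ => z | right _ =>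
               match decide (Y x) with left _ => h x | right _ => d (index_of x xs) end end).
    split; [|split].
    + destruct (decide _); congruence.
    + intros x Hx; destruct (decide (x = x0)); [subst; contradiction|].
      destruct (decide (Y x)); [auto|contradiction].
    + revert H; apply Hls. intros [x|a] Hw; simpl; auto.
      destruct (decide (x = x0)); simpl; auto. destruct (decide (Y x)); simpl; auto.
      destruct (index_of_spec x xs x0 (in_left_vars x ls Hw)) as [Hlt _].
      rewrite (proj2 (Nat.ltb_lt _ _) Hlt); auto.
  - intros [b [Hb0 [Hb H]]].
    exists (fun j => b (nth j xs x0)). revert H; apply Hls.
    intros [x|a] Hw; simpl; auto.
    destruct (decide (x = x0)); simpl; [congruence|].
    destruct (decide (Y x)); simpl; [symmetry; auto|].
    destruct (index_of_spec x xs x0 (in_left_vars x ls Hw)) as [Hlt Hnth].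
    rewrite (proj2 (Nat.ltb_lt _ _) Hlt), Hnth; auto.
Qed.

End Extension.

Hypotheses (Hnat : small K nat) (Hsat : saturated L M K)
  (HX : small K X) (HA : small_set L M K A).

Lemma partial_realization_extend Y h x0 : partial_realization Y h -> ~ Y x0 ->
  exists z, partial_realization (fun x => Y x \/ x = x0)
              (fun x => if decide (x = x0) then z else h x).
Proof.
  intros GY HY0.
  assert (HA1 : small_set L M K (enlarged_params Y h))
    by (apply small_set_union; auto; apply small_set_image; auto).
  set (Gm := fun g => exists l, Forall Sg l /\ g = extension_formula Y h x0 (fconj L l)).
  destruct (Hsat _ HA1 Gm) as [b1 Hb1].
  - intros lg Hlg.
    destruct (gather_lists Sg (fun l => extension_formula Y h x0 (fconj L l)) lg Hlg)
      as [lall [Hall Hin]].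
    destruct (GY lall Hall) as [b [Hbh Hball]].
    exists (fun _ => b x0). apply Forall_forall; intros g Hg.
    destruct (Hin g Hg) as [l [Hl ->]].
    apply (sat_extension_formula Y h x0 _ _ HY0). exists b; split; auto; split; auto.
    apply sat_fconj, Forall_forall; intros phi Hphi.
    rewrite Forall_forall in Hball; auto.
  - exists (b1 tt); intros l Hl.
    assert (Hg : sat L M (extension_formula Y h x0 (fconj L l))
                   (env_over L M unit (enlarged_params Y h) (fun _ => b1 tt))).
    { refine (sat_ext L M _ _ _ _ (Hb1 _ (ex_intro _ l (conj Hl eq_refl)))).
      intros [[]|a]; reflexivity. }
    apply (sat_extension_formula Y h x0 _ _ HY0) in Hg.
    destruct Hg as [b [Hb0 [Hbh Hbl]]].
    exists b; split; [|apply sat_fconj; auto].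
    intros x [Hx| ->]; destruct (decide _) as [E|E]; subst; auto; contradiction.
Qed.

Theorem saturated_tuples : fin_sat L M X (env_over L M X A) Sg ->
  exists b, forall phi, Sg phi -> sat L M phi (env_over L M X A b).
Proof.
  intros Hfs. destruct (Hfs nil (Forall_nil _)) as [b0 _].
  assert (G0 : partial_realization (fun _ => False) b0).
  { intros l Hl; destruct (Hfs l Hl) as [b Hb]; exists b; split; auto; intros; contradiction. }
  destruct (zorn_premaximal {s | partial_realization (fst s) (snd s)} (exist _ (_, b0) G0)
              (fun s t => extends (proj1_sig s) (proj1_sig t)))
    as [[[Y h] GY] Hmax].
  - intros t; split; auto.
  - intros r s t [H1 H2] [H3 H4]; split; auto. intros x Hx; rewrite H2; auto.
  - intros Ch Htot. destruct (classic (exists s, Ch s)) as [[s1 Hs1]|Hne].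
    + apply (partial_realization_chain Ch Htot s1 Hs1).
    + exists (exist _ (_, b0) G0); intros s Hs; exfalso; eauto.
  - simpl in Hmax.
    assert (HYall : forall x, Y x).
    { intros x0; apply NNPP; intros HY0.
      destruct (partial_realization_extend Y h x0 GY HY0) as [z Gz].
      set (h' := fun x => if decide (x = x0) then z else h x) in Gz.
      assert (Hle : extends (Y, h) (fun x => Y x \/ x = x0, h')).
      { split; simpl; [auto|].
        intros x Hx; unfold h'; destruct (decide _) as [E|E]; subst; auto; contradiction. }
      destruct (Hmax (exist _ (_, h') Gz) Hle) as [H _]; simpl in H. apply HY0, H; auto. }
    exists h; intros phi Hphi.
    destruct (GY (phi :: nil) (Forall_cons _ Hphi (Forall_nil _))) as [b [Hbh Hb]].
    inversion Hb as [|? ? Hb' _]; subst. revert Hb'. apply sat_ext.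
    intros [x|a]; simpl; auto. apply Hbh, HYall.
Qed.

End Saturation.

(** * Lascar strong types *)

Section Restriction.
Variables (L : language) (M : structure L) (K X : Type).

Definition param_var (D : M -> Prop) (w : X + {x | D x}) : X + M :=
  match w with inl x => inl x | inr m => inr (proj1_sig m) end.

Definition realizes_restriction (q : formula L (X + M) -> Prop) (D : M -> Prop) (c : X -> M) :=
  forall phi : formula L (X + {x | D x}),
    q (rename L (param_var D) phi) -> sat L M phi (env_over L M X D c).

Lemma restriction_realized (Hnat : small K nat) (Hsat : saturated L M K) (HX : small K X)
  q (Hq : global_type L M X q) D (HD : small_set L M K D) :
  exists c, realizes_restriction q D c.
Proof.
  apply (saturated_tuples L M K X D (fun phi => q (rename L (param_var D) phi))); auto.
  intros l Hl. destruct (proj1 Hq (map (rename L (param_var D)) l)) as [b Hb].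
  - apply Forall_map; auto.
  - exists b. apply Forall_map in Hb. revert Hb; apply Forall_impl.
    intros phi H. rewrite sat_rename in H. revert H; apply sat_ext.
    intros [x|m]; reflexivity.
Qed.

Lemma restriction_realizations_equiv q (Hq : global_type L M X q) D c1 c2 :
  realizes_restriction q D c1 -> realizes_restriction q D c2 -> equiv_over L M X D c1 c2.
Proof.
  intros H1 H2 phi. destruct (proj2 Hq (rename L (param_var D) phi)) as [H|H].
  - split; intros _; auto.
  - assert (E1 := H1 (fneg phi) H); assert (E2 := H2 (fneg phi) H).
    unfold sat in *; simpl in *; tauto.
Qed.

Lemma restriction_realizes q p D c : (forall phi, p phi -> q (rename L inl phi)) ->
  realizes_restriction q D c -> realizes L M X p c.
Proof.
  intros Hpq Hc phi Hphi. apply Hpq in Hphi.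
  assert (E : rename L inl phi = rename L (param_var D) (rename L inl phi))
    by (rewrite rename_rename; apply rename_ext; reflexivity).
  rewrite E in Hphi. apply (Hc (rename L inl phi)) in Hphi.
  rewrite sat_rename in Hphi. exact Hphi.
Qed.

Lemma realizes_restriction_mono q D D' c : (forall y, D' y -> D y) ->
  realizes_restriction q D c -> realizes_restriction q D' c.
Proof.
  intros Hsub Hc phi Hphi.
  set (j := fun w : X + {x | D' x} => match w with
            | inl x => inl x | inr m => inr (exist D (proj1_sig m) (Hsub _ (proj2_sig m))) end).
  rewrite (rename_ext L _ (fun w => param_var D (j w))), <- rename_rename in Hphi
    by (intros [x|m]; reflexivity).
  apply Hc in Hphi; rewrite sat_rename in Hphi.
  revert Hphi; apply sat_ext; intros [x|m]; reflexivity.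
Qed.

Lemma realizes_restriction_automorphism q (Hinv : aut_invariant L M X q) D c (s t : M -> M)
  (Hs : automorphism L M s) (Hts : forall x, t (s x) = x) (Hst : forall x, s (t x) = x) :
  realizes_restriction q D c -> realizes_restriction q (fun y => D (t y)) (fun x => s (c x)).
Proof.
  intros Hc phi Hphi.
  apply (Hinv t (automorphism_inverse L M s t Hs Hts Hst)) in Hphi.
  set (kap := fun w : X + {y | D (t y)} => match w with
              | inl x => inl x | inr m => inr (exist D (t (proj1_sig m)) (proj2_sig m)) end).
  rewrite rename_rename, (rename_ext L _ (fun w => param_var D (kap w))), <- rename_rename
    in Hphi by (intros [x|m]; reflexivity).
  apply Hc in Hphi; rewrite sat_rename, (sat_automorphism L M s t Hs Hts Hst) in Hphi.
  revert Hphi; apply sat_ext; intros [x|m]; simpl; auto.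
Qed.

End Restriction.

Lemma small_model_automorphism (L : language) (M : structure L) (K : Type) (D : M -> Prop)
  (s t : M -> M) (Hs : automorphism L M s)
  (Hts : forall x, t (s x) = x) (Hst : forall x, s (t x) = x) :
  small_model L M K D -> small_model L M K (fun y => D (t y)).
Proof.
  intros [HDs [[m Hm] [Hcl HTV]]].
  split; [|split; [|split]].
  - apply (small_card_le K _ {x | D x}); auto.
    exists (fun y : {y | D (t y)} => exist D (t (proj1_sig y)) (proj2_sig y)).
    intros [y1 H1] [y2 H2] E; apply sig_ext; simpl.
    apply (f_equal (@proj1_sig _ _)) in E; simpl in E. rewrite <- (Hst y1), E, Hst; auto.
  - exists (s m); rewrite Hts; auto.
  - intros f args Hargs.
    destruct (automorphism_inverse L M s t Hs Hts Hst) as [_ [Hf _]]. rewrite Hf. apply Hcl; auto.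
  - intros V phi e He.
    rewrite (sat_in_ext L M _ phi e (fun v => s (t (e v)))) by (intros; rewrite Hst; auto).
    rewrite <- (sat_in_automorphism L M s t Hs Hts Hst D phi (fun v => t (e v))), HTV by auto.
    rewrite (sat_automorphism L M s t Hs Hts Hst phi (fun v => t (e v))).
    unfold sat; apply sat_in_ext; intros; apply Hst.
Qed.

Definition compose_all {T} (l : list (T -> T)) : T -> T :=
  fold_right (fun g h y => g (h y)) (fun y => y) l.

Lemma compose_all_app {T} (l1 l2 : list (T -> T)) x :
  compose_all (l1 ++ l2) x = compose_all l1 (compose_all l2 x).
Proof. induction l1 as [|g l1 IH]; simpl; auto. rewrite IH; auto. Qed.

Lemma autf_generators_automorphism (L : language) (M : structure L) (K : Type) l :
  Forall (autf_generator L M K) l -> automorphism L M (compose_all l).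
Proof.
  induction 1 as [|g l [Hg _] _ IH]; simpl.
  - apply automorphism_id.
  - apply automorphism_comp; auto.
Qed.

Section Lascar.
Variables (L : language) (M : structure L) (K : Type).

Lemma lascar_equiv_trans X (a b c : X -> M) :
  lascar_equiv L M X K a b -> lascar_equiv L M X K b c -> lascar_equiv L M X K a c.
Proof.
  intros [s [[l1 [Hl1 Hs]] Hab]] [t [[l2 [Hl2 Ht]] Hbc]].
  exists (fun y => t (s y)); split.
  - exists (l2 ++ l1); split; [apply Forall_app; auto|].
    intros y; change (t (s y) = compose_all (l2 ++ l1) y).
    rewrite compose_all_app, Ht, Hs; reflexivity.
  - intros x; rewrite Hab; auto.
Qed.

Lemma lascar_equiv_generator X (a b : X -> M) g : autf_generator L M K g ->
  (forall x, g (a x) = b x) -> lascar_equiv L M X K a b.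
Proof. intros Hg Hab; exists g; split; auto. exists (g :: nil); split; auto. Qed.

Hypotheses (Hnat : small K nat) (Hhom : strongly_homogeneous L M K).

Lemma lascar_equiv_of_equiv_over X (HX : small K X) D (HD : small_model L M K D)
  (a b : X -> M) : equiv_over L M X D a b -> lascar_equiv L M X K a b.
Proof.
  intros Hab.
  assert (HXD : small K (X + {y | D y})) by (apply small_sum; auto; apply HD).
  destruct (Hhom _ HXD (env_over L M X D a) (env_over L M X D b) Hab) as [g [Hg Hgab]].
  apply (lascar_equiv_generator X a b g).
  - split; auto. exists D; split; auto. intros y Hy; apply (Hgab (inr (exist _ y Hy))).
  - intros x; apply (Hgab (inl x)).
Qed.

Lemma lascar_equiv_of_dist_le X (HX : small K X) n (a b : X -> M) :
  lascar_dist_le L M X K n a b -> lascar_equiv L M X K a b.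
Proof.
  intros [m [_ [chain [Ha [Hb Hsteps]]]]].
  assert (Hchain : forall k, k <= m -> lascar_equiv L M X K a (chain k)).
  { induction k as [|k IH]; intros Hk.
    - exists (fun y => y); split; [exists nil; split; auto|]. intros x; rewrite Ha; auto.
    - apply (lascar_equiv_trans X a (chain k)); [apply IH; lia|].
      destruct (Hsteps k ltac:(lia)) as [D [HD Hk']].
      apply (lascar_equiv_of_equiv_over X HX D HD); auto. }
  destruct (Hchain m (le_n m)) as [s [Hs Has]].
  exists s; split; auto. intros x; rewrite Has; auto.
Qed.

Lemma lascar_dist_le_of_eq X n (a b : X -> M) : (forall x, a x = b x) ->
  lascar_dist_le L M X K n a b.
Proof.
  intros Hab; exists 0; split; [lia|]. exists (fun _ => a); repeat split; auto.
  intros i Hi; lia.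
Qed.

Lemma realizations_same_type X p : complete_type_empty L M X p ->
  forall u v, realizes L M X p u -> realizes L M X p v -> same_type L M X u v.
Proof.
  intros [Hfin Hcompl] u v Hu Hv phi.
  destruct (Hcompl phi) as [H|H]; [split; intros; auto|].
  assert (E1 := Hu _ H); assert (E2 := Hv _ H); unfold sat in *; simpl in *; tauto.
Qed.

Hypotheses (HK : card_lt (code L) K) (Hsat : saturated L M K).

Section InvariantExtension.
Variables (X : Type) (p : formula L X -> Prop) (q : formula L (X + M) -> Prop).
Hypotheses (HX : small K X) (Hp : complete_type_empty L M X p) (Hq : global_type L M X q)
  (Hpq : forall phi, p phi -> q (rename L inl phi)) (Hinv : aut_invariant L M X q).

Lemma restriction_realized_by_conjugate D (HD : small_model L M K D) a :
  realizes L M X p a -> exists D', small_model L M K D' /\ realizes_restriction L M X q D' a.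
Proof.
  intros Ha.
  destruct (restriction_realized L M K X Hnat Hsat HX q Hq D (proj1 HD)) as [c Hc].
  assert (Hca := realizations_same_type X p Hp c a
                   (restriction_realizes L M X q p D c Hpq Hc) Ha).
  destruct (Hhom X HX c a Hca) as [s [Hs Hsca]].
  destruct (proj1 Hs) as [t [Hst Hts]].
  exists (fun y => D (t y)); split.
  - apply (small_model_automorphism L M K D s t); auto.
  - intros phi H.
    apply (realizes_restriction_automorphism L M X q Hinv D c s t Hs Hts Hst Hc) in H.
    revert H; apply sat_ext; intros [x|m]; simpl; auto.
Qed.

Lemma invariant_extension_dist_le_2 a b :
  realizes L M X p a -> realizes L M X p b -> lascar_dist_le L M X K 2 a b.
Proof.
  intros Ha Hb.
  destruct (classic (inhabited M)) as [[c0]|HnM].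
  2:{ apply lascar_dist_le_of_eq; intros x; exfalso; apply HnM; exact (inhabits (a x)). }
  destruct (exists_small_model L M K HK c0) as [D HD].
  destruct (restriction_realized_by_conjugate D HD a Ha) as [D1 [HD1 Ha1]].
  destruct (restriction_realized_by_conjugate D HD b Hb) as [D2 [HD2 Hb2]].
  destruct (restriction_realized L M K X Hnat Hsat HX q Hq (fun y => D1 y \/ D2 y))
    as [c Hc]; [apply small_set_union; auto; [apply HD1|apply HD2]|].
  exists 2; split; auto.
  exists (fun i => match i with 0 => a | 1 => c | _ => b end); repeat split; auto.
  intros [|[|i]] Hi; [exists D1|exists D2|lia]; split; auto;
    apply (restriction_realizations_equiv L M X q Hq); auto;
    apply (realizes_restriction_mono L M X q (fun y => D1 y \/ D2 y)); auto.
Qed.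

End InvariantExtension.

Lemma extremely_amenable_lascar X (HX : small K X) p (Hp : complete_type_empty L M X p) :
  extremely_amenable L M X p ->
  forall a b, realizes L M X p a -> realizes L M X p b ->
    lascar_equiv L M X K a b /\ lascar_dist_le L M X K 2 a b.
Proof.
  intros [q [Hq [Hpq Hinv]]] a b Ha Hb.
  assert (Hd := invariant_extension_dist_le_2 X p q HX Hp Hq Hpq Hinv a b Ha Hb).
  split; [apply (lascar_equiv_of_dist_le X HX 2)|]; auto.
Qed.

Lemma complete_type_of X (a : X -> M) : complete_type_empty L M X (fun phi => sat L M phi a).
Proof.
  split.
  - intros l Hl; exists a; auto.
  - intros phi; destruct (classic (sat L M phi a)); [left|right]; auto.
Qed.

Hypothesis HTA : theory_extremely_amenable L M K.

Lemma same_type_lascar_equiv X (HX : small K X) (a b : X -> M) :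
  same_type L M X a b -> lascar_equiv L M X K a b.
Proof.
  intros Hab. set (p := fun phi => sat L M phi a).
  apply (extremely_amenable_lascar X HX p (complete_type_of X a)
           (HTA X HX p (complete_type_of X a)) a b); intros phi H; [auto|apply Hab; auto].
Qed.

Lemma automorphism_autfL s : automorphism L M s -> autfL L M K s.
Proof.
  intros Hs.
  destruct (classic (inhabited M)) as [[c0]|HnM].
  2:{ exists nil; split; auto. intros x; exfalso; apply HnM; constructor; auto. }
  destruct (exists_small_model L M K HK c0) as [D HD].
  destruct (proj1 Hs) as [si [Hs1 Hs2]].
  destruct (same_type_lascar_equiv {x | D x} (proj1 HD) (fun m => proj1_sig m)
              (fun m => s (proj1_sig m))) as [f [[l [Hl Hfl]] Hf]].
  { intros phi; apply (sat_automorphism L M s si Hs Hs2 Hs1). }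
  assert (Hfa : automorphism L M (compose_all l))
    by (apply (autf_generators_automorphism L M K l Hl)).
  destruct (proj1 Hfa) as [fi [Hf1 Hf2]].
  assert (Hg : autf_generator L M K (fun x => fi (s x))).
  { split.
    - apply automorphism_comp; auto. apply (automorphism_inverse L M _ fi Hfa); auto.
    - exists D; split; auto. intros y Hy.
      assert (E := Hf (exist _ y Hy)); simpl in E. rewrite <- E, Hfl; apply Hf2. }
  exists (l ++ (fun x => fi (s x)) :: nil); split; [apply Forall_app; auto|].
  intros x. change (s x = compose_all (l ++ (fun x => fi (s x)) :: nil) x).
  rewrite compose_all_app; simpl. rewrite Hf1; reflexivity.
Qed.

End Lascar.

Theorem proposition5p2 (L : language) (C : structure L) (K : Type)
  (Hmonster : monster L C K) :
  (forall (X : Type), small K X ->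
     forall p : formula L X -> Prop,
       complete_type_empty L C X p -> extremely_amenable L C X p ->
       forall a b : X -> C, realizes L C X p a -> realizes L C X p b ->
         lascar_equiv L C X K a b /\ lascar_dist_le L C X K 2 a b)
  /\
  (theory_extremely_amenable L C K ->
     (forall (X : Type), small K X ->
        forall a b : X -> C, same_type L C X a b -> lascar_equiv L C X K a b)
     /\ (forall s : C -> C, automorphism L C s -> autfL L C K s)).
Proof.
  destruct Hmonster as [HK [Hsat Hhom]].
  assert (Hnat := small_nat_of_code L K HK).
  split; [exact (extremely_amenable_lascar L C K Hnat Hhom HK Hsat)|].
  intros HTA; split.
  - exact (same_type_lascar_equiv L C K Hnat Hhom HK Hsat HTA).
  - exact (automorphism_autfL L C K Hnat Hhom HK Hsat HTA).
Qed.
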